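(* Let $n$ be a positive integer, let $x_0$ be a positive odd integer not divisible by $3$, let $m_0$ be an integer with $0 \le m_0 < 2\cdot 3^n$, and let $m$ be a nonnegative integer with $m \equiv m_0 \pmod{2\cdot 3^n}$. Suppose $x_1 = (2^{m_0}x_0-1)/3$ and $y_1 = (2^{m}x_0-1)/3$ are odd integers. Then $y_1 \equiv x_1 \pmod{2\cdot 3^n}$. *)

From Stdlib Require Import ZArith.

From Stdlib Require Import ZArith Lia.
Open Scope Z_scope.

(* Since [2 ^ (2 * 3 ^ n) = 4 ^ 3 ^ n] and [4 = 1 mod 3], lifting the exponent gives
   [2 ^ (2 * 3 ^ n) = 1 mod 3 ^ (n + 1)], so [2 ^ m = 2 ^ m0 mod 3 ^ (n + 1)].
   Dividing [3 y1 - 3 x1 = x0 (2 ^ m - 2 ^ m0)] by 3 gives [y1 = x1 mod 3 ^ n], and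
   [y1 = x1 mod 2] because both are odd. *)

Lemma divide_pow3_sub1 (d a : Z) : (3 * d | a - 1) -> (9 * d | a ^ 3 - 1).
Proof.
  intros [t Ht].
  exists (t + 3 * d * t ^ 2 + 3 * d ^ 2 * t ^ 3).
  replace a with (1 + t * (3 * d)) by lia.
  ring.
Qed.

Lemma divide_pow_pow3_sub1 (a : Z) (n : nat) :
  (3 | a - 1) -> (3 ^ (Z.of_nat n + 1) | a ^ 3 ^ Z.of_nat n - 1).
Proof.
  intros Ha. induction n as [|n IH]; [cbn; rewrite Z.mul_1_r; exact Ha|].
  replace (3 ^ (Z.of_nat (S n) + 1)) with (9 * 3 ^ Z.of_nat n)
    by (rewrite Nat2Z.inj_succ, <- Z.add_1_r, !Z.pow_add_r by lia; ring).
  replace (a ^ 3 ^ Z.of_nat (S n)) with ((a ^ 3 ^ Z.of_nat n) ^ 3)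
    by (rewrite Nat2Z.inj_succ, Z.pow_succ_r, Z.mul_comm, Z.pow_mul_r by lia; reflexivity).
  apply divide_pow3_sub1.
  replace (3 * 3 ^ Z.of_nat n) with (3 ^ (Z.of_nat n + 1))
    by (rewrite Z.pow_add_r by lia; ring).
  exact IH.
Qed.

Lemma divide_pow_sub1 (d a k : Z) : 0 <= k -> (d | a - 1) -> (d | a ^ k - 1).
Proof.
  intros Hk Hd. rewrite <- (Z2Nat.id k Hk).
  induction (Z.to_nat k) as [|j IH].
  - exists 0. reflexivity.
  - rewrite Nat2Z.inj_succ, Z.pow_succ_r by lia.
    replace (a * a ^ Z.of_nat j - 1) with (a * (a ^ Z.of_nat j - 1) + (a - 1)) by ring.
    apply Z.divide_add_r; [apply Z.divide_mul_r|]; assumption.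
Qed.

Lemma pow3_divide_pow2_period (n : nat) (m0 k : Z) : 0 <= m0 -> 0 <= k ->
  (3 ^ (Z.of_nat n + 1) | 2 ^ (m0 + 2 * 3 ^ Z.of_nat n * k) - 2 ^ m0).
Proof.
  intros Hm0 Hk.
  assert (H3n : 0 <= 3 ^ Z.of_nat n) by (apply Z.pow_nonneg; lia).
  replace (2 ^ (m0 + 2 * 3 ^ Z.of_nat n * k) - 2 ^ m0)
    with (2 ^ m0 * ((4 ^ 3 ^ Z.of_nat n) ^ k - 1)).
  - apply Z.divide_mul_r, divide_pow_sub1; [exact Hk|].
    apply divide_pow_pow3_sub1. exists 1. reflexivity.
  - rewrite Z.pow_add_r, <- Z.mul_assoc, !Z.pow_mul_r by nia.
    change (2 ^ 2) with 4. ring.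
Qed.

Lemma double_divide_sub_odd (q x y : Z) :
  Z.odd q = true -> (q | y - x) -> Z.Odd x -> Z.Odd y -> (2 * q | y - x).
Proof.
  intros Hq [e He] [a Ha] [b Hb].
  assert (Hev : Z.even (e * q) = true).
  { rewrite <- He. replace (y - x) with (2 * (b - a)) by lia.
    rewrite Z.even_mul. reflexivity. }
  rewrite Z.even_mul, <- (Z.negb_odd q), Hq, Bool.orb_false_r in Hev.
  apply Z.even_spec in Hev as [f Hf].
  exists f. lia.
Qed.

Lemma mod_eq_of_divide_sub (N x y : Z) : N <> 0 -> (N | y - x) -> y mod N = x mod N.
Proof.
  intros HN [e He].
  replace y with (x + e * N) by lia.
  apply Z.mod_add, HN.
Qed.

Theorem theorem9 (n : nat) (x0 m0 m x1 y1 : Z) :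
  (0 < n)%nat ->
  0 < x0 -> Z.Odd x0 -> ~ (3 | x0) ->
  0 <= m0 < 2 * 3 ^ Z.of_nat n ->
  0 <= m ->
  m mod (2 * 3 ^ Z.of_nat n) = m0 mod (2 * 3 ^ Z.of_nat n) ->
  3 * x1 = 2 ^ m0 * x0 - 1 ->
  3 * y1 = 2 ^ m * x0 - 1 ->
  Z.Odd x1 -> Z.Odd y1 ->
  y1 mod (2 * 3 ^ Z.of_nat n) = x1 mod (2 * 3 ^ Z.of_nat n).
Proof.
  intros _ _ _ _ Hm0 Hm Hmod Hx1 Hy1 Ox1 Oy1.
  set (q := 3 ^ Z.of_nat n) in *.
  assert (Hq : 0 < q) by (apply Z.pow_pos_nonneg; lia).
  rewrite (Z.mod_small m0) in Hmod by lia.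
  assert (Hm_split : m = m0 + 2 * q * (m / (2 * q)))
    by (pose proof (Z.div_mod m (2 * q)); lia).
  assert (Hk : 0 <= m / (2 * q)) by (apply Z.div_pos; lia).
  assert (H3q : (3 * q | 3 * (y1 - x1))).
  { replace (3 * q) with (3 ^ (Z.of_nat n + 1)) by (unfold q; rewrite Z.pow_add_r by lia; ring).
    replace (3 * (y1 - x1)) with (x0 * (2 ^ m - 2 ^ m0)) by lia.
    rewrite Hm_split.
    apply Z.divide_mul_r, pow3_divide_pow2_period; lia. }
  apply Z.mul_divide_cancel_l in H3q; [|lia].
  apply mod_eq_of_divide_sub; [lia|].
  apply double_divide_sub_odd; [|assumption..].
  unfold q. destruct n; [reflexivity|]. rewrite Z.odd_pow by lia. reflexivity.
Qed.
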